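(* Let $\widehat{A}=A+\epsilon B$ and $\widehat{C}=C+\epsilon D$ with $A,B,C,D\in\mathbb{R}^{n\times n}$ be such that the dual Drazin generalized inverses of $\widehat{A}$, $\widehat{C}$ and $\widehat{A}\widehat{C}$ exist and have the particular form $\widehat{A}^{D}=A^{D}-\epsilon A^{D}BA^{D}$, $\widehat{C}^{D}=C^{D}-\epsilon C^{D}DC^{D}$, $(\widehat{A}\widehat{C})^{D}=(AC)^{D}-\epsilon (AC)^{D}(AD+BC)(AC)^{D}$. If $AC=CA$, $C^{D}B=BC^{D}$ and $A^{D}D=DA^{D}$, then $(\widehat{A}\widehat{C})^{D}=\widehat{A}^{D}\widehat{C}^{D}=\widehat{C}^{D}\widehat{A}^{D}$.
   Context: A dual number is $a+\epsilon b$ with $a,b\in\mathbb{R}$, where $\epsilon\neq 0$, $\epsilon^2=0$ and $\epsilon$ commutes with reals. A dual matrix is $A+\epsilon B$ with $A,B$ real; sums and products are computed formally using $\epsilon^2=0$, and equality means equality of real and dual parts. $\mathbb{D}^n$ is the set of dual column vectors of length $n$; the dual index $Ind(\widehat{A})$ of a square dual matrix is the smallest nonnegative integer $k$ with $\{\widehat{A}^k\widehat{z}:\widehat{z}\in\mathbb{D}^n\}=\{\widehat{A}^{k+1}\widehat{z}:\widehat{z}\in\mathbb{D}^n\}$. $A^D$ denotes the Drazin inverse of a real square matrix $A$. For $Ind(\widehat{A})=k$, the dual Drazin generalized inverse $\widehat{A}^D$ is the dual matrix $\widehat{X}$ (if it exists) with $\widehat{A}^{k}\widehat{X}\widehat{A}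 = \widehat{A}^{k}$, $\widehat{X}\widehat{A}\widehat{X} = \widehat{X}$, $\widehat{A}\widehat{X} =\widehat{X}\widehat{A}$. *)

From mathcomp Require Import all_boot all_order all_algebra.
Set Implicit Arguments. Unset Strict Implicit. Unset Printing Implicit Defensive.
Import GRing.Theory Num.Theory.
Local Open Scope ring_scope.

Definition mxpow (R : realFieldType) (n : nat) (A : 'M[R]_n) (k : nat) : 'M[R]_n :=
  iter k (mulmx A) 1%:M.

Definition mx_range_stable (R : realFieldType) (n : nat) (A : 'M[R]_n) (k : nat) :=
  forall w : 'cV[R]_n,
    (exists z, w = mxpow A k *m z) <-> (exists z, w = mxpow A k.+1 *m z).

Definition is_mx_index (R : realFieldType) (n : nat) (A : 'M[R]_n) (k : nat) :=
  mx_range_stable A k /\ forall j, (j < k)%N -> ~ mx_range_stable A j.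

Definition is_drazin (R : realFieldType) (n : nat) (A X : 'M[R]_n) :=
  exists k, is_mx_index A k /\
    mxpow A k *m X *m A = mxpow A k /\ X *m A *m X = X /\ A *m X = X *m A.

(* Dual matrices A + eps B represented as pairs (A, B); eps^2 = 0. *)
Definition dmx (R : realFieldType) (n : nat) := ('M[R]_n * 'M[R]_n)%type.

Definition dmul (R : realFieldType) (n : nat) (X Y : dmx R n) : dmx R n :=
  (X.1 *m Y.1, X.1 *m Y.2 + X.2 *m Y.1).

Definition dunit (R : realFieldType) (n : nat) : dmx R n := (1%:M, 0).

Definition dpow (R : realFieldType) (n : nat) (X : dmx R n) (k : nat) : dmx R n :=
  iter k (dmul X) (dunit R n).

(* Dual vectors a + eps b, as pairs of real column vectors. *)
Definition dvec (R : realFieldType) (n : nat) := ('cV[R]_n * 'cV[R]_n)%type.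

Definition dapply (R : realFieldType) (n : nat) (X : dmx R n) (z : dvec R n) : dvec R n :=
  (X.1 *m z.1, X.1 *m z.2 + X.2 *m z.1).

Definition dual_range_stable (R : realFieldType) (n : nat) (X : dmx R n) (k : nat) :=
  forall w : dvec R n,
    (exists z, w = dapply (dpow X k) z) <-> (exists z, w = dapply (dpow X k.+1) z).

Definition is_dual_index (R : realFieldType) (n : nat) (X : dmx R n) (k : nat) :=
  dual_range_stable X k /\ forall j, (j < k)%N -> ~ dual_range_stable X j.

Definition is_dual_drazin (R : realFieldType) (n : nat) (X Y : dmx R n) :=
  exists k, is_dual_index X k /\
    dmul (dmul (dpow X k) Y) X = dpow X k /\
    dmul (dmul Y X) Y = Y /\
    dmul X Y = dmul Y X.

From mathcomp Require Import all_boot all_order all_algebra.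
Import GRing.Theory.
Local Open Scope ring_scope.

(* Only the real parts carry information: in any ring, a Drazin inverse is
   unique and commutes with everything its matrix commutes with, so for
   commuting A and C the product A^D C^D is the Drazin inverse of AC, hence
   equals (AC)^D, and A, C, A^D, C^D pairwise commute.  The dual parts then
   agree by a direct computation using A^D A A^D = A^D and C^D C C^D = C^D. *)

Set Implicit Arguments.
Unset Strict Implicit.

Section DrazinInverse.
Variable T : pzRingType.

(* [k] is any exponent at which the equations hold, not necessarily the index. *)
Definition drazin_inverse (a x : T) (k : nat) :=
  [/\ a ^+ k * x * a = a ^+ k, x * a * x = x & GRing.comm a x].

Lemma drazin_inverseW a x k j :
  (k <= j)%N -> drazin_inverse a x k -> drazin_inverse a x j.
Proof.
move=> /subnK <- [pow_k xax cax].
by split=> //; rewrite exprD -!mulrA (mulrA (a ^+ k)) pow_k.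
Qed.

Section Properties.
Variables (a x : T) (k : nat).
Hypothesis dx : drazin_inverse a x k.

Lemma drazin_idem j : (x * a) ^+ j.+1 = x * a.
Proof.
have [_ xax _] := dx.
by elim: j => // j IH; rewrite exprS IH mulrA xax.
Qed.

Lemma drazin_exprM j : x ^+ j.+1 * a ^+ j.+1 = x * a.
Proof. by have [_ _ cax] := dx; rewrite -exprMn_comm ?drazin_idem. Qed.

Lemma drazin_exprSr : a ^+ k.+1 * x = a ^+ k.
Proof. by have [pow_k _ cax] := dx; rewrite exprSr -mulrA cax mulrA pow_k. Qed.

Lemma drazin_exprSl : x * a ^+ k.+1 = a ^+ k.
Proof.
have [_ _ cax] := dx.
by rewrite -[RHS]drazin_exprSr; exact: commrX (commr_sym cax).
Qed.

Lemma drazin_factorl : x ^+ k.+1 * a ^+ k = x.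
Proof.
have [_ xax cax] := dx.
have xaX_x i : (x * a) ^+ i * x = x.
  by elim: i => [|i IH]; rewrite ?mul1r // exprSr -mulrA xax.
have cxak : GRing.comm x (a ^+ k) := commrX k (commr_sym cax).
by rewrite exprSr -mulrA cxak mulrA -exprMn_comm.
Qed.

Lemma drazin_factorr : a ^+ k * x ^+ k.+1 = x.
Proof.
have [_ _ cax] := dx.
by rewrite -[RHS]drazin_factorl; apply/commr_sym/commrX/commr_sym/commrX.
Qed.

Lemma drazin_commute c : GRing.comm a c -> GRing.comm x c.
Proof.
move=> cac; have [_ _ cax] := dx.
have cakc i : GRing.comm (a ^+ i) c by apply/commr_sym/commrX/commr_sym.
have xc : x * c = x * a * c * x.
  rewrite -[in LHS]drazin_factorl -mulrA cakc -drazin_exprSr !mulrA.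
  by rewrite -(mulrA _ c) -cakc !mulrA drazin_exprM.
have cx : c * x = x * c * (a * x).
  rewrite -[in LHS]drazin_factorr mulrA -cakc -drazin_exprSl.
  by rewrite -!mulrA (mulrA _ c) cakc -!mulrA -exprMn_comm // cax drazin_idem.
by rewrite /GRing.comm xc cx -(mulrA x a c) cac !mulrA.
Qed.

End Properties.

Lemma drazin_inverse_unique a x y k l :
  drazin_inverse a x k -> drazin_inverse a y l -> x = y.
Proof.
move=> /(drazin_inverseW (leq_maxl k l)) dx /(drazin_inverseW (leq_maxr k l)) dy.
have xE : x = x * a * y.
  by rewrite -[in LHS](drazin_factorl dx) -(drazin_exprSr dy) (exprSr a) !mulrA drazin_factorl.
have yE : y = x * a * y.
  by rewrite -[in LHS](drazin_factorr dy) -(drazin_exprSl dx) (exprS a) -!mulrA drazin_factorr.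
by rewrite xE -yE.
Qed.

Lemma mulrACA_comm (a b c d : T) : GRing.comm b c -> a * b * (c * d) = a * c * (b * d).
Proof. by move=> cbc; rewrite -mulrA (mulrA b) cbc !mulrA. Qed.

Lemma drazin_inverseM a c x y k l : GRing.comm a c ->
  drazin_inverse a x k -> drazin_inverse c y l -> drazin_inverse (a * c) (x * y) (maxn k l).
Proof.
move=> cac /(drazin_inverseW (leq_maxl k l)) dx /(drazin_inverseW (leq_maxr k l)) dy.
have cxc := drazin_commute dx cac.
have cya := drazin_commute dy (commr_sym cac).
have cyx := drazin_commute dy (commr_sym cxc).
set m := maxn k l in dx dy *.
have [pow_a xax cax] := dx; have [pow_c ycy ccy] := dy.
have cmx : GRing.comm (c ^+ m) x by apply/commr_sym/commrX.
have cmya : GRing.comm (c ^+ m * y) a.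
  by apply/commr_sym/commrM; [apply: commrX | apply: commr_sym].
split.
- rewrite exprMn_comm // (mulrACA_comm (a ^+ m) _ cmx).
  by rewrite (mulrACA_comm (_ * x) _ cmya) pow_a pow_c.
- have cycx : GRing.comm (y * c) x by apply/commr_sym/commrM.
  by rewrite (mulrACA_comm x _ cya) (mulrACA_comm (x * a) _ cycx) xax ycy.
- by apply/commrM; apply/commr_sym/commrM.
Qed.

Section DualPart.
Variables a b c d x y : T.
Hypotheses (xax : x * a * x = x) (ycy : y * c * y = y).
Hypotheses (cya : GRing.comm y a) (cxc : GRing.comm x c) (cyx : GRing.comm y x).
Hypotheses (cxd : GRing.comm x d) (cyb : GRing.comm y b).

Lemma dual_part_mul :
  x * y * (a * d + b * c) * (x * y) = x * (y * d * y) + x * b * x * y.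
Proof.
have cydx : GRing.comm (y * d) x by apply/commr_sym/commrM.
have cycx : GRing.comm (y * c) x by apply/commr_sym/commrM.
rewrite mulrDr mulrDl (mulrACA_comm x _ cya) (mulrACA_comm (x * a) _ cydx) xax.
by rewrite (mulrACA_comm x _ cyb) (mulrACA_comm (x * b) _ cycx) ycy !mulrA.
Qed.

Lemma dual_part_comm :
  x * (y * d * y) + x * b * x * y = y * (x * b * x) + y * d * y * x.
Proof.
have cx_ydy : GRing.comm x (y * d * y) by do 2?apply: commrM.
have cy_xbx : GRing.comm y (x * b * x) by do 2?apply: commrM.
by rewrite cx_ydy -mulrA -cy_xbx addrC.
Qed.

End DualPart.

End DrazinInverse.

Lemma mxpowE (R : realFieldType) (n : nat) (A : 'M[R]_n) k : mxpow A k = A ^+ k.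
Proof.
by elim: k => [|k IH]; rewrite ?expr0 // exprS /mxpow iterS -/(mxpow A k) IH mulmxE.
Qed.

Lemma is_drazin_inverse (R : realFieldType) (n : nat) (A X : 'M[R]_n) :
  is_drazin A X -> exists k, drazin_inverse A X k.
Proof. by move=> [k [_ +]]; rewrite mxpowE !mulmxE => -[powk [XAX AX]]; exists k. Qed.

Theorem mainTheorem7 (R : realFieldType) (n : nat)
  (A B C D AD CD ACD : 'M[R]_n) :
  is_drazin A AD -> is_drazin C CD -> is_drazin (A *m C) ACD ->
  is_dual_drazin (A, B) (AD, - (AD *m B *m AD)) ->
  is_dual_drazin (C, D) (CD, - (CD *m D *m CD)) ->
  is_dual_drazin (dmul (A, B) (C, D))
                 (ACD, - (ACD *m (A *m D + B *m C) *m ACD)) ->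
  A *m C = C *m A -> CD *m B = B *m CD -> AD *m D = D *m AD ->
  (ACD, - (ACD *m (A *m D + B *m C) *m ACD))
    = dmul (AD, - (AD *m B *m AD)) (CD, - (CD *m D *m CD)) /\
  dmul (AD, - (AD *m B *m AD)) (CD, - (CD *m D *m CD))
    = dmul (CD, - (CD *m D *m CD)) (AD, - (AD *m B *m AD)).
Proof.
move=> /is_drazin_inverse [k dA] /is_drazin_inverse [l dC] /is_drazin_inverse [m dAC] _ _ _.
rewrite /dmul /= !mulmxE => cAC cyb cxd.
rewrite (drazin_inverse_unique dAC (drazin_inverseM cAC dA dC)).
have cyA := drazin_commute dC (commr_sym cAC).
have cxC := drazin_commute dA cAC.
have cyx := drazin_commute dC (commr_sym cxC).
have [_ xAx _] := dA; have [_ yCy _] := dC.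
rewrite !mulrN !mulNr -!opprD (dual_part_mul xAx yCy cyA cxC cyx cxd cyb).
by rewrite (dual_part_comm cyx cxd cyb) cyx.
Qed.
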